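(* Let $n \ge 3$ be an integer and let $I$ be a degree-based topological index with coefficients $c_{12},c_{13},c_{22},c_{23},c_{33}$. Define $c'_{12} = c_{12}-4c_{22}+3c_{23}$, $c'_{13} = c_{13}-3c_{22}+2c_{23}$, $c'_{33} = c_{22}-2c_{23}+c_{33}$. If $c'_{13}<c'_{12}<-c'_{33}<0$, then the path $P_n$ on $n$ vertices is, up to isomorphism, the only tree in $\mathcal{G}_3(n,n-1)$ that maximizes $I$.
   Context: For integers $n,m$, $\mathcal{G}_3(n,m)$ denotes the set of simple connected undirected graphs (chemical graphs) with $n$ vertices, $m$ edges and maximum degree at most $3$; in particular $\mathcal{G}_3(n,n-1)$ is the set of trees of order $n$ with maximum degree at most $3$. For a graph $G$ and $1\le i\le j$, an $ij$-edge is an edge whose endpoints have degrees $i$ and $j$, and $m_{ij}$ denotes the number of $ij$-edges of $G$. A degree-based topological index $I$ is a function on chemical graphs of order $n\ge 3$ of the form $I(G)=c_{12}m_{12}+c_{13}m_{13}+c_{22}m_{22}+c_{23}m_{23}+c_{33}m_{33}$, where the $c_{ij}$ are fixed real numbers. *)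

From mathcomp Require Import all_boot all_order all_fingroup all_algebra.
Set Implicit Arguments. Unset Strict Implicit. Unset Printing Implicit Defensive.
Import Order.TTheory GRing.Theory Num.Theory.

Definition simple_graph (n : nat) (e : rel 'I_n) : Prop :=
  symmetric e /\ irreflexive e.

Definition deg (n : nat) (e : rel 'I_n) (x : 'I_n) : nat := #|[set y | e x y]|.

Definition nedges (n : nat) (e : rel 'I_n) : nat :=
  #|[set p : 'I_n * 'I_n | (p.1 < p.2)%N && e p.1 p.2]|.

Definition connected_graph (n : nat) (e : rel 'I_n) : Prop :=
  forall x y : 'I_n, connect e x y.

(* G in G_3(n,m): simple, connected, n vertices, m edges, max degree <= 3 *)
Definition chemical_graph (n m : nat) (e : rel 'I_n) : Prop :=
  [/\ simple_graph e, connected_graph e, nedges e = m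
    & forall x, (deg e x <= 3)%N].

Definition mij (n : nat) (e : rel 'I_n) (i j : nat) : nat :=
  #|[set p : 'I_n * 'I_n | [&& (p.1 < p.2)%N, e p.1 p.2 &
      ((deg e p.1 == i) && (deg e p.2 == j))
      || ((deg e p.1 == j) && (deg e p.2 == i))]]|.

Definition topo_index (R : numDomainType) (c12 c13 c22 c23 c33 : R)
  (n : nat) (e : rel 'I_n) : R :=
  (c12 * (mij e 1 2)%:R + c13 * (mij e 1 3)%:R + c22 * (mij e 2 2)%:R
   + c23 * (mij e 2 3)%:R + c33 * (mij e 3 3)%:R)%R.

Definition path_graph (n : nat) : rel 'I_n :=
  fun x y => ((x : nat).+1 == y) || ((y : nat).+1 == x).

Definition graph_iso (n : nat) (e1 e2 : rel 'I_n) : Prop :=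
  exists f : {perm 'I_n}, forall x y, e1 x y = e2 (f x) (f y).

Arguments chemical_graph n m e : clear implicits.
Arguments path_graph n : clear implicits.

From mathcomp Require Import all_boot all_order all_fingroup all_algebra.
From mathcomp Require Import zify ring lra.
Set Implicit Arguments. Unset Strict Implicit. Unset Printing Implicit Defensive.
Import Order.TTheory GRing.Theory Num.Theory.

(* Let n_k be the number of vertices of degree k in a chemical tree T of order
   n >= 3.  Counting edge ends at the vertices of each degree gives
   k n_k = sum_j m_kj (with m_11 = 0, as two adjacent leaves would form a
   component), and the handshake lemma with n - 1 edges gives n_1 = n_3 + 2.
   Eliminating m_22 and m_23 yields
     I(T) = c22 (n + 5) - 6 c23 + c'12 m12 + c'13 m13 + c'33 m33,
   with m12 + m13 = n_3 + 2.  Rooting T, every edge joins a vertex to its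
   parent, so sending an edge to its child endpoint bounds m33 by n_3.  Hence
     I(T) - I(P_n) <= (c'13 - c'12) m13 + (c'12 + c'33) n_3,
   which is negative as soon as n_3 > 0.  A tree with no vertex of degree 3 is
   a path: numbering its vertices by their distance to a leaf is an
   isomorphism onto P_n. *)

Section DegreeCounting.
Variables (n : nat) (e : rel 'I_n).

Lemma card_pair_set (P : pred ('I_n * 'I_n)) :
  #|[set p | P p]| = \sum_(x : 'I_n) \sum_(y : 'I_n) (P (x, y) : nat).
Proof.
rewrite pair_bigA -sum1_card big_mkcond /=; apply: eq_bigr => -[x y] _.
by rewrite inE; case: (P _).
Qed.

Lemma degE x : deg e x = \sum_(y : 'I_n) (e x y : nat).
Proof.
rewrite /deg -sum1_card big_mkcond /=; apply: eq_bigr => y _.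
by rewrite inE; case: (e x y).
Qed.

Lemma sum_pairs_ltn_split (A : rel 'I_n) : irreflexive A ->
  \sum_(x : 'I_n) \sum_(y : 'I_n) (((x < y) && A x y) : nat)
  + \sum_(x : 'I_n) \sum_(y : 'I_n) (((x < y) && A y x) : nat)
  = \sum_(x : 'I_n) \sum_(y : 'I_n) (A x y : nat).
Proof.
move=> irrA; rewrite [X in _ + X = _]exchange_big /= -big_split /=.
apply: eq_bigr => x _; rewrite -big_split /=; apply: eq_bigr => y _.
case: (ltngtP x y) => [||/val_inj ->]; rewrite /= ?addn0 ?add0n ?irrA //.
Qed.

Definition ndeg (k : nat) : nat := #|[set x | deg e x == k]|.

(* Ordered pairs: an ij-edge is counted once by [arcs i j] if i != j, twice if i = j. *)
Definition arcs (i j : nat) : nat :=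
  \sum_(x : 'I_n) \sum_(y : 'I_n) ([&& e x y, deg e x == i & deg e y == j] : nat).

Lemma ndegE k : ndeg k = \sum_(x : 'I_n) ((deg e x == k) : nat).
Proof.
rewrite /ndeg -sum1_card big_mkcond /=; apply: eq_bigr => x _.
by rewrite inE; case: (_ == _).
Qed.

Hypothesis deg_range : forall x, 1 <= deg e x <= 3.

Lemma card_ord_ndeg : n = ndeg 1 + ndeg 2 + ndeg 3.
Proof.
rewrite !ndegE -!big_split /= -{1}(card_ord n) -sum1_card.
by apply: eq_bigr => x _; have := deg_range x; case: (deg e x) => [|[|[|[]]]].
Qed.

Lemma sum_deg_ndeg : \sum_(x : 'I_n) deg e x = ndeg 1 + 2 * ndeg 2 + 3 * ndeg 3.
Proof.
rewrite !ndegE !big_distrr -!big_split /=; apply: eq_bigr => x _.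
by have := deg_range x; case: (deg e x) => [|[|[|[]]]].
Qed.

Lemma mul_ndeg_arcs k : k * ndeg k = arcs k 1 + arcs k 2 + arcs k 3.
Proof.
rewrite ndegE big_distrr /= /arcs -!big_split /=; apply: eq_bigr => x _.
rewrite -!big_split /=; case: eqP => [<-|_] /=; last first.
  by rewrite muln0 big1 // => y _; rewrite !andbF.
rewrite muln1 degE; apply: eq_bigr => y _.
by case: (e x y); have := deg_range y; case: (deg e y) => [|[|[|[]]]].
Qed.

Hypothesis simple_e : simple_graph e.

Lemma arcsC i j : arcs i j = arcs j i.
Proof.
rewrite /arcs exchange_big /=; apply: eq_bigr => x _; apply: eq_bigr => y _.
by rewrite (proj1 simple_e); case: (e x y); case: (_ == _); case: (_ == _).
Qed.

Lemma handshake : \sum_(x : 'I_n) deg e x = 2 * nedges e.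
Proof.
have [sym_e irr_e] := simple_e.
rewrite /nedges card_pair_set mul2n -addnn.
rewrite [X in (_ = _ + X)](eq_bigr (fun x : 'I_n => \sum_(y : 'I_n) (((x < y) && e y x) : nat)))
  => [|x _]; last by apply: eq_bigr => y _; rewrite sym_e.
by rewrite sum_pairs_ltn_split //; apply: eq_bigr => x _; rewrite degE.
Qed.

Lemma mij_arcs i j : i != j -> mij e i j = arcs i j.
Proof.
have [sym_e irr_e] := simple_e; move=> neq_ij.
set A := fun x y => [&& e x y, deg e x == i & deg e y == j].
rewrite /mij card_pair_set /arcs -(@sum_pairs_ltn_split A); last by move=> x; rewrite /A irr_e.
rewrite -big_split /=; apply: eq_bigr => x _; rewrite -big_split /=.
apply: eq_bigr => y _; rewrite /A /= (sym_e y x).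
case: (x < y) => //=; case: (e x y) => //=.
case: (deg e x =P i) => [->|_]; rewrite ?(negbTE neq_ij) ?andbF ?addn0 ?orbF //=.
by rewrite andbC.
Qed.

Lemma mij_diag_arcs i : 2 * mij e i i = arcs i i.
Proof.
have [sym_e irr_e] := simple_e.
set A := fun x y => [&& e x y, deg e x == i & deg e y == i].
rewrite mul2n -addnn /mij card_pair_set /arcs -(@sum_pairs_ltn_split A); last by move=> x; rewrite /A irr_e.
by congr (_ + _); apply: eq_bigr => x _; apply: eq_bigr => y _;
  rewrite /A /= ?(sym_e y x) orbb // [(_ == i) && _]andbC.
Qed.

End DegreeCounting.

Lemma exists_notin_set n (A : {set 'I_n}) : #|A| < n -> exists z, z \notin A.
Proof.
move=> ltAn; have : 0 < #|~: A| by rewrite cardsCs setCK card_ord; lia.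
by rewrite card_gt0 => /set0Pn [z]; rewrite inE; exists z.
Qed.

Lemma deg_gt0 n (e : rel 'I_n) x : 1 < n -> connected_graph e -> 0 < deg e x.
Proof.
move=> n_gt1 conn_e.
have [y] : exists y, y \notin [set x] by apply: exists_notin_set; rewrite cards1.
rewrite inE; case/connectP: (conn_e x y) => -[/= _ ->|z p /= /andP [exz _] _ _].
  by rewrite eqxx.
by rewrite /deg card_gt0; apply/set0Pn; exists z; rewrite inE.
Qed.

Lemma leaf_adj n (e : rel 'I_n) x y z : deg e x = 1 -> e x y -> e x z -> z = y.
Proof.
move=> /eqP/cards1P [w Nx] exy exz.
have : y \in [set y | e x y] by rewrite inE.
have : z \in [set y | e x y] by rewrite inE.
by rewrite Nx !inE => /eqP -> /eqP ->.
Qed.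

Lemma leaf_leaf_edge n (e : rel 'I_n) x y : 2 < n -> simple_graph e ->
  connected_graph e -> e x y -> deg e x = 1 -> deg e y = 1 -> False.
Proof.
move=> n_gt2 [sym_e _] conn_e exy leaf_x leaf_y.
have eyx : e y x by rewrite sym_e.
have closed_xy : closed e [set x; y].
  move=> u v euv; have evu : e v u by rewrite sym_e.
  rewrite !inE; apply/idP/idP => /orP [] /eqP ?; subst.
  - by rewrite (leaf_adj leaf_x exy euv) eqxx orbT.
  - by rewrite (leaf_adj leaf_y eyx euv) eqxx.
  - by rewrite (leaf_adj leaf_x exy evu) eqxx orbT.
  - by rewrite (leaf_adj leaf_y eyx evu) eqxx.
have [z] : exists z, z \notin [set x; y].
  by apply: exists_notin_set; rewrite cards2; case: (x != y); lia.
by rewrite -(closed_connect closed_xy (conn_e x z)) !inE eqxx.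
Qed.

Lemma arcs11 n (e : rel 'I_n) : 2 < n -> simple_graph e -> connected_graph e ->
  arcs e 1 1 = 0.
Proof.
move=> n_gt2 simple_e conn_e; rewrite /arcs big1 // => x _; rewrite big1 // => y _.
case exy: (e x y) => //=; case: eqP => //= leaf_x; case: eqP => //= leaf_y.
by case: (leaf_leaf_edge n_gt2 simple_e conn_e exy leaf_x leaf_y).
Qed.

Lemma exists_leaf n (e : rel 'I_n) : 0 < n -> simple_graph e -> nedges e = n.-1 ->
  exists r, deg e r <= 1.
Proof.
move=> n_gt0 simple_e tree_e.
case: (pickP (fun r => deg e r <= 1)) => [r leaf_r|no_leaf]; first by exists r.
have : \sum_(x : 'I_n) 2 <= \sum_(x : 'I_n) deg e x.
  by apply: leq_sum => x _; have := no_leaf x; rewrite /=; lia.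
by rewrite sum_nat_const card_ord handshake // tree_e; lia.
Qed.

Section BreadthFirstSearch.
Variables (n : nat) (e : rel 'I_n) (r : 'I_n).

Fixpoint within k v : bool :=
  if k is k'.+1 then within k' v || [exists u, within k' u && e u v] else v == r.

Lemma within_path p : path e r p -> within (size p) (last r p).
Proof.
elim/last_ind: p => [|p y IHp] /=; first by rewrite eqxx.
rewrite rcons_path size_rcons last_rcons => /andP [path_p e_last] /=.
by apply/orP; right; apply/existsP; exists (last r p); rewrite IHp.
Qed.

Lemma dist_subproof v : exists k, within k v || (n <= k).
Proof. by exists n; rewrite leqnn orbT. Qed.

(* The disjunct [n <= k] only makes [dist] total; for a vertex reachable from
   [r] it is the graph distance (see [within_dist]). *)
Definition dist v := ex_minn (dist_subproof v).

Lemma dist_min k v : within k v -> dist v <= k.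
Proof. by rewrite /dist; case: ex_minnP => m _ min_m within_k; apply: min_m; rewrite within_k. Qed.

Hypothesis conn_r : forall x, connect e r x.

Lemma within_dist v : within (dist v) v /\ dist v < n.
Proof.
have [k /andP [within_k lt_kn]] : exists k, within k v && (k < n).
  case/connectP: (conn_r v) => p path_p ->; case/shortenP: path_p => p' path_p' uniq_p' _.
  exists (size p'); rewrite within_path //=.
  by have := max_card (mem (r :: p')); rewrite card_ord (card_uniqP uniq_p').
have := dist_min within_k; rewrite /dist; case: ex_minnP => m /orP [within_m|le_nm] _ le_mk.
  by split=> //; apply: leq_ltn_trans lt_kn.
by have := leq_trans le_nm le_mk; rewrite leqNgt lt_kn.
Qed.

Lemma dist_eq0 v : (dist v == 0) = (v == r).
Proof.
apply/idP/eqP => [/eqP dv0 | ->]; last by rewrite -leqn0 (@dist_min 0) //= eqxx.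
by have [] := within_dist v; rewrite dv0 => /eqP.
Qed.

Lemma dist_edge u v : e u v -> dist v <= (dist u).+1.
Proof.
move=> euv; apply: dist_min => /=; apply/orP; right.
by apply/existsP; exists u; rewrite euv (proj1 (within_dist u)).
Qed.

Definition parent v := odflt r [pick u | e u v && ((dist u).+1 == dist v)].

Lemma parentP v : v != r -> e (parent v) v /\ (dist (parent v)).+1 = dist v.
Proof.
move=> v_neq_r; rewrite /parent; case: pickP => [u /andP [-> /eqP ->] //|no_parent].
have [] := within_dist v; case dv: (dist v) => [|k] /=.
  by move/eqP: dv; rewrite dist_eq0 (negbTE v_neq_r).
case/orP => [/dist_min | /existsP [u /andP [within_u euv]]]; first by rewrite dv ltnn.
have := no_parent u; rewrite euv -dv /=; have := dist_min within_u.
by have := dist_edge euv; lia.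
Qed.

Hypotheses (simple_e : simple_graph e) (tree_e : nedges e = n.-1).

Definition parent_edge (v : 'I_n) := if v < parent v then (v, parent v) else (parent v, v).

Lemma parent_edge_onto :
  [set parent_edge v | v in [set~ r]] = [set p : 'I_n * 'I_n | (p.1 < p.2) && e p.1 p.2].
Proof.
have [sym_e _] := simple_e.
apply/eqP; rewrite eqEcard; apply/andP; split.
  apply/subsetP => p /imsetP [v]; rewrite !inE => v_neq_r ->.
  have [epv dpv] := parentP v_neq_r.
  rewrite /parent_edge; case: (ltngtP v (parent v)) => [lt_vp|lt_pv|/val_inj pv].
  - by rewrite /= lt_vp (sym_e v).
  - by rewrite /= lt_pv epv.
  - by rewrite -pv in dpv; lia.
rewrite (@card_in_imset _ _ parent_edge); first by rewrite cardsC1 card_ord -tree_e.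
move=> v w; rewrite !inE => /parentP [_ dpv] /parentP [_ dpw].
rewrite /parent_edge; case: ifP => _; case: ifP => _ [] pv pw //.
  by rewrite pw in dpv; rewrite -pv in dpw; lia.
by rewrite pv in dpv; rewrite -pw in dpw; lia.
Qed.

Lemma edge_parent x y : e x y -> (x != r /\ parent x = y) \/ (y != r /\ parent y = x).
Proof.
have [sym_e irr_e] := simple_e.
wlog lt_xy : x y / x < y => [wlog_lt exy|exy].
  case: (ltngtP x y) => [lt_xy|lt_yx|/val_inj eq_xy]; first exact: wlog_lt.
    by rewrite sym_e in exy; case: (wlog_lt y x lt_yx exy); [right|left].
  by rewrite eq_xy irr_e in exy.
have : (x, y) \in [set p : 'I_n * 'I_n | (p.1 < p.2) && e p.1 p.2] by rewrite inE lt_xy exy.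
rewrite -parent_edge_onto => /imsetP [v]; rewrite !inE /parent_edge => v_neq_r.
by case: ifP => _ [-> ->]; [left|right].
Qed.

Lemma mij_diag_le_ndeg k : mij e k k <= ndeg e k.
Proof.
apply: (@leq_trans #|parent_edge @: [set v | (v != r) && (deg e v == k)]|); last first.
  by apply: leq_trans (leq_imset_card _ _) _; apply/subset_leq_card/subsetP => v;
     rewrite !inE => /andP [].
apply/subset_leq_card/subsetP => -[x y]; rewrite inE /= orbb => /and3P [lt_xy exy].
case/andP=> dx dy; apply/imsetP.
case: (edge_parent exy) => [[x_neq_r px] | [y_neq_r py]].
  by exists x; rewrite ?inE ?x_neq_r // /parent_edge px lt_xy.
by exists y; rewrite ?inE ?y_neq_r // /parent_edge py ltnNge (ltnW lt_xy).
Qed.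

Hypotheses (leaf_r : deg e r <= 1) (deg_le2 : forall x, deg e x <= 2).

Lemma dist_inj : injective dist.
Proof.
have [sym_e _] := simple_e.
suff dist_eq k u v : dist u = k -> dist v = k -> u = v by move=> u v duv; exact: dist_eq duv erefl.
(* Distinct vertices at the same distance with a common parent w would give w
   degree at least 3, or at least 2 if w is the leaf r. *)
elim: k u v => [|k IHk] u v du dv.
  by move/eqP: du; move/eqP: dv; rewrite !dist_eq0 => /eqP -> /eqP ->.
have u_neq_r : u != r by rewrite -dist_eq0 du.
have v_neq_r : v != r by rewrite -dist_eq0 dv.
have [epu dpu] := parentP u_neq_r; have [epv dpv] := parentP v_neq_r.
have puv : parent u = parent v by apply: IHk; lia.
case: (eqVneq u v) => // u_neq_v; set w := parent u in epu dpu puv.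
rewrite -puv in epv.
have nbrs_w : forall z, z \in [set u; v] -> e w z by move=> z; rewrite !inE => /orP [] /eqP ->.
case: (eqVneq w r) => [w_eq_r | w_neq_r].
  have : #|[set u; v]| <= deg e w.
    by apply/subset_leq_card/subsetP => z /nbrs_w; rewrite inE.
  by rewrite cards2 u_neq_v w_eq_r; have := leaf_r; lia.
have [epw dpw] := parentP w_neq_r.
have : #|parent w |: [set u; v]| <= deg e w.
  by apply/subset_leq_card/subsetP => z /setU1P [-> | /nbrs_w]; rewrite inE // sym_e.
rewrite cardsU1 cards2 u_neq_v !inE.
have /negbTE -> : parent w != u by apply/eqP => pwu; rewrite pwu in dpw; lia.
have /negbTE -> : parent w != v by apply/eqP => pwv; rewrite pwv in dpw; lia.
by have := deg_le2 w; lia.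
Qed.

Lemma tree_iso_path : graph_iso e (path_graph n).
Proof.
have [sym_e _] := simple_e.
pose f v : 'I_n := Ordinal (proj2 (within_dist v)).
have f_inj : injective f by move=> u v /(congr1 val) /dist_inj.
have dist_succ_edge a b : (dist a).+1 = dist b -> e a b.
  move=> dab; have b_neq_r : b != r by rewrite -dist_eq0 -dab.
  have [epb dpb] := parentP b_neq_r.
  by have -> : a = parent b by apply: dist_inj; lia.
exists (perm f_inj) => x y; rewrite !permE /path_graph /=.
apply/idP/idP => [exy | /orP [] /eqP dxy]; last 2 first.
- exact: dist_succ_edge.
- by rewrite sym_e; exact: dist_succ_edge.
case: (edge_parent exy) => [[x_neq_r <-] | [y_neq_r <-]].
  by rewrite (proj2 (parentP x_neq_r)) eqxx orbT.
by rewrite (proj2 (parentP y_neq_r)) eqxx.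
Qed.

End BreadthFirstSearch.

Lemma sum_ord_eqn n k : \sum_(y : 'I_n) ((y : nat) == k : nat) = (k < n).
Proof.
case: (ltnP k n) => [lt_kn|le_nk]; last first.
  by rewrite big1 // => y _; case: eqP => // yk; have := ltn_ord y; lia.
rewrite (bigD1 (Ordinal lt_kn)) //= eqxx big1 // => y /eqP y_neq_k.
by case: eqP => // yk; case: y_neq_k; apply: val_inj.
Qed.

Section PathGraph.
Variable n : nat.

Lemma path_simple : simple_graph (path_graph n).
Proof.
split=> [x y|x]; first by rewrite /path_graph orbC.
by rewrite /path_graph; case: eqP => //= ?; lia.
Qed.

Lemma path_deg_le2 x : deg (path_graph n) x <= 2.
Proof.
rewrite degE; apply: (@leq_trans
  (\sum_(y : 'I_n) (((y : nat) == x.+1 : nat) + ((y : nat) == x.-1 : nat)))).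
  apply: leq_sum => y _; rewrite /path_graph.
  by case: (_ =P _) => ?; case: (_ =P _) => ?; case: (_ =P _) => ?; case: (_ =P _) => ? //=; lia.
by rewrite big_split /= !sum_ord_eqn; case: (_ < n); case: (_ < n).
Qed.

Lemma path_connected : connected_graph (path_graph n).
Proof.
have : connect_sym (path_graph n) by apply: sym_connect_sym; case: path_simple.
case: n => [_ []//|m sym_connect].
have from0 k (lt_km : k < m.+1) : connect (path_graph m.+1) ord0 (Ordinal lt_km).
  elim: k lt_km => [lt_0m|k IHk lt_km]; first by rewrite (_ : Ordinal _ = ord0) //; apply: val_inj.
  have lt_k'm : k < m.+1 by lia.
  by apply: connect_trans (IHk lt_k'm) (connect1 _); rewrite /path_graph /= eqxx.
move=> [x lt_xm] [y lt_ym]; apply: (@connect_trans _ _ ord0); last exact: from0.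
by rewrite sym_connect; exact: from0.
Qed.

Lemma path_nedges : nedges (path_graph n) = n.-1.
Proof.
rewrite /nedges card_pair_set.
transitivity (\sum_(x : 'I_n) \sum_(y : 'I_n) ((y : nat) == x.+1 : nat)).
  apply: eq_bigr => x _; apply: eq_bigr => y _; rewrite /path_graph /=.
  by do 2 case: eqP => ? //=; case: ltnP => ? //=; lia.
under eq_bigr => x _ do rewrite sum_ord_eqn.
case: n => [|m]; first by rewrite big_ord0.
rewrite big_ord_recr /= ltnn addn0 (eq_bigr (fun _ => 1)) => [|i _]; last by rewrite ltnS ltn_ord.
by rewrite sum_nat_const card_ord muln1.
Qed.

Lemma path_chemical : chemical_graph n n.-1 (path_graph n).
Proof.
split; [exact: path_simple | exact: path_connected | exact: path_nedges |].
by move=> x; apply: leq_trans (path_deg_le2 x) _.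
Qed.

End PathGraph.

Section ChemicalTree.
Variables (n : nat) (e : rel 'I_n).
Hypotheses (n_gt2 : 2 < n) (chem_e : chemical_graph n n.-1 e).

Lemma chemical_deg_range x : 1 <= deg e x <= 3.
Proof. by case: chem_e => _ conn_e _ ->; rewrite andbT deg_gt0 //; lia. Qed.

Lemma chemical_deg_le2 : ndeg e 3 = 0 -> forall x, deg e x <= 2.
Proof.
move=> /cards0_eq no_deg3 x; have := chemical_deg_range x.
have : x \notin [set x | deg e x == 3] by rewrite no_deg3 inE.
by rewrite inE; case: (deg e x) => [|[|[|[]]]].
Qed.

Lemma chemical_tree_mij :
  [/\ mij e 2 2 + 4 * mij e 1 2 + 3 * mij e 1 3 = n + 5 + mij e 3 3,
      mij e 2 3 + 6 + 2 * mij e 3 3 = 3 * mij e 1 2 + 2 * mij e 1 3,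
      mij e 1 2 + mij e 1 3 = ndeg e 3 + 2 &
      mij e 1 3 + mij e 2 3 + 2 * mij e 3 3 = 3 * ndeg e 3].
Proof.
case: chem_e => simple_e conn_e tree_e _.
have deg_e := chemical_deg_range.
have := handshake simple_e; rewrite sum_deg_ndeg // tree_e => sum_deg.
have := card_ord_ndeg deg_e; have := arcs11 n_gt2 simple_e conn_e.
have := mul_ndeg_arcs deg_e 1; have := mul_ndeg_arcs deg_e 2; have := mul_ndeg_arcs deg_e 3.
rewrite !(arcsC simple_e 2 1) !(arcsC simple_e 3 1) !(arcsC simple_e 3 2).
rewrite -!(mij_diag_arcs simple_e) -!mij_arcs //.
by split; lia.
Qed.

Lemma chemical_tree_mij33 : mij e 3 3 <= ndeg e 3.
Proof.
case: chem_e => simple_e conn_e tree_e _.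
have r : 'I_n by exists 0; lia.
exact: mij_diag_le_ndeg (conn_e r) simple_e tree_e 3.
Qed.

Lemma chemical_tree_iso_path : (forall x, deg e x <= 2) -> graph_iso e (path_graph n).
Proof.
case: chem_e => simple_e conn_e tree_e _ deg_le2.
have [r leaf_r] := exists_leaf (ltnW (ltnW n_gt2)) simple_e tree_e.
exact: tree_iso_path (conn_e r) simple_e tree_e leaf_r deg_le2.
Qed.

End ChemicalTree.

Local Open Scope ring_scope.

Section TopologicalIndex.
Variables (R : realDomainType) (c12 c13 c22 c23 c33 : R).
Let I n (e : rel 'I_n) := topo_index c12 c13 c22 c23 c33 e.
Let c12' := c12 - 4 * c22 + 3 * c23.
Let c13' := c13 - 3 * c22 + 2 * c23.
Let c33' := c22 - 2 * c23 + c33.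

Lemma topo_index_chemical_tree n (e : rel 'I_n) : (2 < n)%N -> chemical_graph n n.-1 e ->
  I e = c22 * (n + 5)%:R - 6 * c23
        + c12' * (mij e 1 2)%:R + c13' * (mij e 1 3)%:R + c33' * (mij e 3 3)%:R.
Proof.
move=> n_gt2 chem_e; have [m22E m23E _ _] := chemical_tree_mij n_gt2 chem_e.
move: m22E m23E => /(congr1 (GRing.natmul (1 : R))) + /(congr1 (GRing.natmul (1 : R))).
rewrite !natrD => m22E m23E.
have m22R : (mij e 2 2)%:R = (n + 5)%:R + (mij e 3 3)%:R
                             - 4 * (mij e 1 2)%:R - 3 * (mij e 1 3)%:R :> R.
  by rewrite natrD; lra.
have m23R : (mij e 2 3)%:R = 3 * (mij e 1 2)%:R + 2 * (mij e 1 3)%:R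
                             - 6 - 2 * (mij e 3 3)%:R :> R by lra.
by rewrite /I /topo_index m22R m23R /c12' /c13' /c33'; ring.
Qed.

Lemma topo_index_chemical_tree_no_deg3 n (e : rel 'I_n) :
  (2 < n)%N -> chemical_graph n n.-1 e -> ndeg e 3 = 0%N ->
  I e = c22 * (n + 5)%:R - 6 * c23 + c12' * 2.
Proof.
move=> n_gt2 chem_e no_deg3; have [_ _ m12E m3E] := chemical_tree_mij n_gt2 chem_e.
have [m13_0 m33_0] : mij e 1 3 = 0%N /\ mij e 3 3 = 0%N by lia.
have m12_2 : mij e 1 2 = 2%N by lia.
by rewrite topo_index_chemical_tree // m12_2 m13_0 m33_0 !mulr0 !addr0.
Qed.

Lemma topo_index_path n : (2 < n)%N ->
  I (path_graph n) = c22 * (n + 5)%:R - 6 * c23 + c12' * 2.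
Proof.
move=> n_gt2; apply: topo_index_chemical_tree_no_deg3 (path_chemical n) _ => //.
apply/eqP; rewrite cards_eq0; apply/eqP/setP => x.
by rewrite !inE ltn_eqF // ltnS path_deg_le2.
Qed.

Lemma topo_index_eq_path n (e : rel 'I_n) :
  (2 < n)%N -> chemical_graph n n.-1 e -> ndeg e 3 = 0%N -> I e = I (path_graph n).
Proof. by move=> n_gt2 chem_e no_deg3; rewrite topo_index_path // topo_index_chemical_tree_no_deg3. Qed.

Hypotheses (lt_c13'_c12' : c13' < c12') (lt_c12'_c33' : c12' < - c33') (c33'_gt0 : - c33' < 0).

Lemma topo_index_lt_path n (e : rel 'I_n) :
  (2 < n)%N -> chemical_graph n n.-1 e -> (0 < ndeg e 3)%N -> I e < I (path_graph n).
Proof.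
move=> n_gt2 chem_e deg3; have [_ _ m12E _] := chemical_tree_mij n_gt2 chem_e.
have m12R : (mij e 1 2)%:R = (ndeg e 3)%:R + 2 - (mij e 1 3)%:R :> R.
  by rewrite -(natrD R _ 2) -m12E natrD addrK.
have le_m13 : (c13' - c12') * (mij e 1 3)%:R <= 0 by rewrite mulr_le0_ge0 // subr_le0 ltW.
have le_m33 : c33' * (mij e 3 3)%:R <= c33' * (ndeg e 3)%:R.
  by rewrite ler_wpM2l ?ler_nat ?chemical_tree_mij33 // -oppr_le0 ltW.
have lt_n3 : (c12' + c33') * (ndeg e 3)%:R < 0.
  by rewrite pmulr_llt0 ?ltr0n // -ltrBrDr sub0r.
rewrite topo_index_chemical_tree // topo_index_path // m12R.
by move: le_m13 le_m33 lt_n3; lra.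
Qed.

End TopologicalIndex.

Unset Implicit Arguments.

Theorem theorem1 (R : realFieldType) (n : nat) (c12 c13 c22 c23 c33 : R) :
  (3 <= n)%N ->
  let c12' := c12 - 4 * c22 + 3 * c23 in
  let c13' := c13 - 3 * c22 + 2 * c23 in
  let c33' := c22 - 2 * c23 + c33 in
  c13' < c12' -> c12' < - c33' -> - c33' < 0 ->
  chemical_graph n n.-1 (path_graph n) /\
  (forall e : rel 'I_n, chemical_graph n n.-1 e ->
     topo_index c12 c13 c22 c23 c33 e
       <= topo_index c12 c13 c22 c23 c33 (path_graph n)
     /\ (topo_index c12 c13 c22 c23 c33 e
           = topo_index c12 c13 c22 c23 c33 (path_graph n) ->
         graph_iso e (path_graph n))).
Proof.
move=> n_gt2 c12' c13' c33' lt_c13'_c12' lt_c12'_c33' c33'_gt0.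
split=> [|e chem_e]; first exact: path_chemical.
have [no_deg3 | deg3] := posnP (ndeg e 3).
  rewrite topo_index_eq_path //; split=> // _.
  exact/chemical_tree_iso_path/chemical_deg_le2.
have lt_index := topo_index_lt_path lt_c13'_c12' lt_c12'_c33' c33'_gt0 n_gt2 chem_e deg3.
by split=> [|eq_index]; [exact: ltW | by rewrite eq_index ltxx in lt_index].
Qed.
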